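(* Let $R_1$ and $R_2$ be finite commutative principal ideal rings with unity, and let $R=R_1\times R_2$. Suppose $\operatorname{diam}(\Gamma(R_1))=\operatorname{diam}(\Gamma(R_2))=1$. Then $\overline{\Gamma(R)}$ is not a divisor graph.
   Context: For a commutative ring $S$ with unity, $Z(S)$ denotes its set of zero divisors. The zero divisor graph $\Gamma(S)$ is the simple graph with vertex set $Z(S)\setminus\{0\}$, distinct $a,b$ adjacent iff $ab=0$; its complement $\overline{\Gamma(S)}$ has the same vertex set with distinct $a,b$ adjacent iff $ab\neq 0$. The diameter of a graph is the maximum distance (number of edges in a shortest path) between pairs of vertices. For a nonempty set $T$ of positive integers, the divisor graph $G(T)$ has vertex set $T$, with distinct $i,j$ adjacent iff $i\mid j$ or $j\mid i$; a graph is a divisor graph if it is isomorphic to some $G(T)$. *)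

From HB Require Import structures.
From mathcomp Require Import all_boot all_order all_algebra.
Set Implicit Arguments. Unset Strict Implicit. Unset Printing Implicit Defensive.
Import GRing.Theory.
Local Open Scope ring_scope.

HB.instance Definition _ (R1 R2 : finComNzRingType) := Finite.on (R1 * R2)%type.

Definition zero_divisor (S : finComNzRingType) (a : S) : bool :=
  [exists b : S, (b != 0) && (a * b == 0)].

Definition zdg_vertices (S : finComNzRingType) : {set S} :=
  [set a | zero_divisor a & a != 0].

Definition zdg_adj (S : finComNzRingType) : rel S := fun a b => a * b == 0.
Definition zdg_compl_adj (S : finComNzRingType) : rel S := fun a b => a * b != 0.

(* Simple graph given by a vertex set A and a relation e (only its values on
   distinct elements of A matter).  Edge relation restricted accordingly. *)
Definition gedge (V : finType) (A : {set V}) (e : rel V) : rel V :=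
  fun u v => [&& u \in A, v \in A, u != v & e u v].

Definition dist_le (V : finType) (A : {set V}) (e : rel V) (u v : V) (k : nat)
  : Prop :=
  exists p : seq V, [&& path (gedge A e) u p, last u p == v & size p <= k]%N.

Definition has_diameter (V : finType) (A : {set V}) (e : rel V) (d : nat) : Prop :=
  (forall u v, u \in A -> v \in A -> dist_le A e u v d) /\
  (exists u v, [/\ u \in A, v \in A &
     forall k, (k < d)%N -> ~ dist_le A e u v k]).

(* (A, e) is a divisor graph: isomorphic to G(T) for a nonempty set T of
   positive integers, i.e. there is an injective map f from A to positive
   integers such that distinct u, v are adjacent iff f u | f v or f v | f u
   (T is then the image of f). *)
Definition is_divisor_graph (V : finType) (A : {set V}) (e : rel V) : Prop :=
  A != set0 /\
  exists f : V -> nat,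
    [/\ {in A &, injective f},
        {in A, forall u, (0 < f u)%N} &
        {in A &, forall u v, u != v ->
            e u v = (f u %| f v)%N || (f v %| f u)%N}].

Definition is_ideal (S : finComNzRingType) (I : {set S}) : Prop :=
  [/\ (0 : S) \in I,
      {in I &, forall x y, x + y \in I},
      {in I, forall x, - x \in I} &
      forall r, {in I, forall x, r * x \in I}].

Definition principal_ideal_ring (S : finComNzRingType) : Prop :=
  forall I : {set S}, is_ideal I -> exists a : S, I = [set a * r | r : S].

From mathcomp Require Import all_boot all_order all_algebra.
Local Open Scope ring_scope.
Import GRing.Theory.
Set Implicit Arguments.
Unset Strict Implicit.
Unset Printing Implicit Defensive.

(* A divisor labelling f orients every edge uv of the graph (u -> v iff
   f u | f v), and when uv, uw are edges with v, w non-adjacent both edges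
   must point the same way at u (otherwise transitivity would make v, w
   comparable).  Pick nonzero a, b in R1 and c, d in R2 with ab = 0 = cd.
   In the complement of Gamma(R1 x R2) the seven vertices (0,1), (0,c),
   (1,0), (1,d), (a,0), (b,1), (b,d) carry a closed chain of such forced
   edge pairs that turns the orientation of the edge (0,1)(0,c) an odd
   number of times, which is absurd. *)

Definition dvdn_comparable (m n : nat) : bool := (m %| n)%N || (n %| m)%N.

Lemma dvdn_comparableC (m n : nat) : dvdn_comparable m n = dvdn_comparable n m.
Proof. exact: orbC. Qed.

Lemma dvdn_forced (x y z : nat) :
  dvdn_comparable x y -> dvdn_comparable x z -> ~~ dvdn_comparable y z ->
  (x %| y)%N = (x %| z)%N.
Proof.
have forward u v : dvdn_comparable x v -> ~~ dvdn_comparable u v ->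
    (x %| u)%N -> (x %| v)%N.
  by move=> /orP[// | vx] /norP[_ /negP vu] xu; case: vu; apply: dvdn_trans xu.
move=> cxy cxz nyz; apply/idP/idP; first exact: forward.
by apply: forward; rewrite // dvdn_comparableC.
Qed.

Lemma dvdn_flip (x y : nat) :
  x != y -> dvdn_comparable x y -> (x %| y)%N = ~~ (y %| x)%N.
Proof. by rewrite /dvdn_comparable eqn_dvd; case: (x %| y)%N; case: (y %| x)%N. Qed.

Lemma dvdn_forcing_cycle (x1 x2 x3 x4 x5 x6 x7 : nat) :
  dvdn_comparable x1 x2 -> dvdn_comparable x1 x4 -> dvdn_comparable x1 x7 ->
  dvdn_comparable x2 x6 -> dvdn_comparable x3 x5 -> dvdn_comparable x3 x6 ->
  dvdn_comparable x3 x7 -> dvdn_comparable x4 x5 -> dvdn_comparable x4 x6 ->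
  ~~ dvdn_comparable x1 x3 -> ~~ dvdn_comparable x1 x5 ->
  ~~ dvdn_comparable x2 x3 -> ~~ dvdn_comparable x2 x4 ->
  ~~ dvdn_comparable x2 x7 -> ~~ dvdn_comparable x5 x6 ->
  ~~ dvdn_comparable x5 x7 ->
  x1 != x4 -> x1 != x7 -> x3 != x6 -> x3 != x7 -> x4 != x6 -> False.
Proof.
move=> c12 c14 c17 c26 c35 c36 c37 c45 c46 n13 n15 n23 n24 n27 n56 n57.
move=> d14 d17 d36 d37 d46.
have sym m n : dvdn_comparable m n -> dvdn_comparable n m.
  by rewrite dvdn_comparableC.
have := dvdn_forced c12 c14 n24.
rewrite (dvdn_flip d14 c14) (dvdn_forced (sym _ _ c14) c45 n15).
rewrite (dvdn_forced c45 c46 n56) (dvdn_flip d46 c46).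
rewrite -(dvdn_forced (sym _ _ c26) (sym _ _ c46) n24).
rewrite (dvdn_forced (sym _ _ c26) (sym _ _ c36) n23) -(dvdn_flip d36 c36).
rewrite -(dvdn_forced c35 c36 n56) (dvdn_forced c35 c37 n57) (dvdn_flip d37 c37).
rewrite -(dvdn_forced (sym _ _ c17) (sym _ _ c37) n13) -(dvdn_flip d17 c17).
rewrite -(dvdn_forced c12 c17 n27).
by case: (x1 %| x2)%N.
Qed.

Lemma mem_zdg_vertices (S : finComNzRingType) (x y : S) :
  x != 0 -> y != 0 -> x * y == 0 -> x \in zdg_vertices S.
Proof. by move=> x0 y0 xy0; rewrite inE x0 andbT; apply/existsP; exists y; rewrite y0. Qed.

Lemma zdg_has_diameter_mul_eq0 (S : finComNzRingType) (k : nat) :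
  has_diameter (zdg_vertices S) (@zdg_adj S) k ->
  exists a b : S, [/\ a != 0, b != 0 & a * b = 0].
Proof.
move=> [_ [u [_ [+ _ _]]]].
by rewrite inE => /andP[/existsP[b /andP[b0 /eqP ub0]] u0]; exists u, b.
Qed.

Lemma mul_eq0_neq1 (S : nzRingType) (x y : S) : y != 0 -> x * y = 0 -> x != 1.
Proof. by move=> y0 xy0; apply: contraNneq y0 => x1; rewrite -xy0 x1 mul1r. Qed.

Section ProductConfiguration.
Variables (R1 R2 : finComNzRingType) (a b : R1) (c d : R2).
Hypotheses (a0 : a != 0) (b0 : b != 0) (ab0 : a * b = 0).
Hypotheses (c0 : c != 0) (d0 : d != 0) (cd0 : c * d = 0).

Let ba0 : b * a = 0. Proof. by rewrite mulrC. Qed.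
Let dc0 : d * c = 0. Proof. by rewrite mulrC. Qed.
Let a1 : a != 1. Proof. exact: mul_eq0_neq1 b0 ab0. Qed.
Let c1 : c != 1. Proof. exact: mul_eq0_neq1 d0 cd0. Qed.
Let d1 : d != 1. Proof. exact: mul_eq0_neq1 c0 dc0. Qed.

(* Atoms [0 == x] and [1 == x] are turned into [x == 0] and [x == 1];
   [oner_eq0] must act in between, or the second flip would undo the first
   on [0 == 1]. *)
Local Ltac pair_arith :=
  rewrite !xpair_eqE /= ?(mul0r, mulr0, mul1r, mulr1, ab0, ba0, cd0, dc0, eqxx)
    ?[0 == _]eq_sym ?oner_eq0 ?[1 == _]eq_sym
    ?(negbTE a0, negbTE b0, negbTE c0, negbTE d0, negbTE a1, negbTE c1, negbTE d1)
    ?(andbF, andFb) //.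

Lemma compl_zdg_prod_not_divisor_graph :
  ~ is_divisor_graph (zdg_vertices (R1 * R2)%type) (@zdg_compl_adj (R1 * R2)%type).
Proof.
move=> [_ [f [f_inj _ f_adj]]].
set V := zdg_vertices (R1 * R2)%type.
have cmpE : {in V &, forall u v, u != v ->
    dvdn_comparable (f u) (f v) = (u * v != 0)}.
  by move=> u v uV vV uv; rewrite /dvdn_comparable -f_adj.
have inV (u w : R1 * R2) : u != 0 -> w != 0 -> u * w == 0 -> u \in V.
  exact: mem_zdg_vertices.
have V01 : (0, 1) \in V by apply: (inV _ (1, 0)); pair_arith.
have V0c : (0, c) \in V by apply: (inV _ (1, 0)); pair_arith.
have V10 : (1, 0) \in V by apply: (inV _ (0, 1)); pair_arith.
have V1d : (1, d) \in V by apply: (inV _ (0, c)); pair_arith.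
have Va0 : (a, 0) \in V by apply: (inV _ (0, 1)); pair_arith.
have Vb1 : (b, 1) \in V by apply: (inV _ (a, 0)); pair_arith.
have Vbd : (b, d) \in V by apply: (inV _ (a, 0)); pair_arith.
apply: (@dvdn_forcing_cycle (f (0, 1)) (f (0, c)) (f (1, 0)) (f (1, d))
                            (f (a, 0)) (f (b, 1)) (f (b, d))).
all: by rewrite ?(inj_in_eq f_inj) ?cmpE //; pair_arith.
Qed.

End ProductConfiguration.

Theorem theorem2p4 (R1 R2 : finComNzRingType) :
  principal_ideal_ring R1 -> principal_ideal_ring R2 ->
  has_diameter (zdg_vertices R1) (@zdg_adj R1) 1 ->
  has_diameter (zdg_vertices R2) (@zdg_adj R2) 1 ->
  ~ is_divisor_graph (zdg_vertices (R1 * R2)%type) (@zdg_compl_adj (R1 * R2)%type).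
Proof.
move=> _ _ /zdg_has_diameter_mul_eq0[a [b [a0 b0 ab0]]].
move=> /zdg_has_diameter_mul_eq0[c [d [c0 d0 cd0]]].
exact: compl_zdg_prod_not_divisor_graph a0 b0 ab0 c0 d0 cd0.
Qed.
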